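(* The static quadratic game in which each player $n=1,\ldots,N$ solves \[ \min_{\delta u_{n,:}} \; J_n(\bar u) + \frac{\partial J_n(\bar u)}{\partial u}\,\delta u + \frac{1}{2}\,\delta u^\top \frac{\partial^2 J_n(\bar u)}{\partial u^2}\,\delta u \] (whose stacked first-order conditions are exactly the Newton step $\frac{\partial \mathcal{J}(\bar u)}{\partial u}\delta u = -\mathcal{J}(\bar u)$) is equivalent to the dynamic game in which each player $n$ solves \[ \min_{\delta u_{n,:}} \; \frac{1}{2}\sum_{k=0}^T\left(\begin{bmatrix}1\\ \delta x_k\\ \delta u_{:,k}\end{bmatrix}^\top M_{n,k}\begin{bmatrix}1\\ \delta x_k\\ \delta u_{:,k}\end{bmatrix} + M^{1x}_{n,k}\,\Delta x_k\right) \] subject to $\delta x_0=0$, $\Delta x_0=0$, $\delta x_{k+1}=A_k\delta x_k + B_k\delta u_{:,k}$, $\Delta x_{k+1} = A_k\Delta x_k + R_k(\delta x_k,\delta u_{:,k})$, $k=0,1,\ldots,T$.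
   Context: Consider a deterministic finite-horizon dynamic game with $N$ players: state $x_k\in\mathbb{R}^{n_x}$, joint input $u_{:,k}=[u_{1,k}^\top,\ldots,u_{N,k}^\top]^\top$, dynamics $x_{k+1}=f_k(x_k,u_{:,k})$ with $x_0$ fixed, and player costs $J_n(u)=\sum_{k=0}^T c_{n,k}(x_k,u_{:,k})$, where $u$ stacks all inputs over all times and $u_{n,:}$ denotes player $n$'s inputs over all times. $\mathcal{J}(u)$ stacks the gradients $\partial J_n/\partial u_{n,:}$, $n=1,\ldots,N$. Let $(\bar x,\bar u)$ be a nominal trajectory satisfying the dynamics, $\delta u = u-\bar u$. Define, evaluated at $(\bar x,\bar u)$: $A_k=\partial f_k/\partial x_k$, $B_k=\partial f_k/\partial u_{:,k}$; $G_k^l$ the Hessian of the $l$-th component $f_k^l$ with respect to $(x_k,u_{:,k})$; $R_k(\delta x_k,\delta u_{:,k})$ the vector whose $l$-th entry is $[\delta x_k;\delta u_{:,k}]^\top G_k^l[\delta x_k;\delta u_{:,k}]$; and \[ M_{n,k}=\begin{bmatrix} 2c_{n,k} & \partial c_{n,k}/\partial x_k & \partial c_{n,k}/\partial u_{:,k}\\ (\partial c_{n,k}/\partial x_k)^\top & \partial^2 c_{n,k}/\partial x_k^2 & \partial^2 c_{n,k}/\partial x_k\partial u_{:,k}\\ (\partial c_{n,k}/\partial u_{:,k})^\top & \partial^2 c_{n,k}/\partial u_{:,k}\partial x_k & \partial^2 c_{n,k}/\partial u_{:,k}^2\end{bmatrix}, \] with block $M^{1x}_{n,k}=\partial c_{n,k}/\partial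 x_k$. The game states satisfy $\delta x_k=\sum_i \frac{\partial x_k}{\partial u_{:,i}}\delta u_{:,i}$ and $\Delta x_k^l=\sum_{i,j}\delta u_{:,i}^\top \frac{\partial^2 x_k^l}{\partial u_{:,i}\partial u_{:,j}}\delta u_{:,j}$. *)

From HB Require Import structures.
From mathcomp Require Import all_boot all_order all_algebra.
From mathcomp Require Import all_classical all_reals all_analysis.
Set Implicit Arguments. Unset Strict Implicit. Unset Printing Implicit Defensive.
Import Order.TTheory GRing.Theory Num.Theory.
Import numFieldNormedType.Exports.
Local Open Scope ring_scope.

Section Defs.
Variable R : realType.

Definition e_ (m : nat) (j : 'I_m) : 'cV[R]_m := delta_mx j 0.

Definition grad m (F : 'cV[R]_m -> R) (w : 'cV[R]_m) : 'rV[R]_m :=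
  \row_j derive F w (e_ j).

Definition hess m (F : 'cV[R]_m -> R) (w : 'cV[R]_m) : 'M[R]_m :=
  \matrix_(i, j) derive (fun y => derive F y (e_ i)) w (e_ j).

Definition jac m p (F : 'cV[R]_m -> 'cV[R]_p) (w : 'cV[R]_m) : 'M[R]_(p, m) :=
  \matrix_(l, j) derive (fun y => F y l 0) w (e_ j).

Definition C2 m (F : 'cV[R]_m -> R) : Prop :=
  (forall y, differentiable F y) /\
  (forall v y, differentiable (fun z => 'd F z v) y) /\
  (forall v1 v2, continuous (fun z => 'd (fun z' => 'd F z' v1) z v2)).

Definition stack nx nu (A : Type) (F : 'cV[R]_nx -> 'cV[R]_nu -> A)
  (w : 'cV[R]_(nx + nu)) : A := F (usubmx w) (dsubmx w).

Section Game.
Variables (N nx nu T : nat).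
Variable f : nat -> 'cV[R]_nx -> 'cV[R]_nu -> 'cV[R]_nx.
Variable c : 'I_N -> nat -> 'cV[R]_nx -> 'cV[R]_nu -> R.
Variable x0 : 'cV[R]_nx.

(* Full input u : column k is the joint input u_{:,k}, k = 0..T. *)
Definition uat (u : 'M[R]_(nu, T.+1)) (k : nat) : 'cV[R]_nu := col (inord k) u.

Fixpoint traj (u : 'M[R]_(nu, T.+1)) (k : nat) : 'cV[R]_nx :=
  match k with
  | 0 => x0
  | k'.+1 => f k' (traj u k') (uat u k')
  end.

Definition Jcost (n : 'I_N) (u : 'M[R]_(nu, T.+1)) : R :=
  \sum_(k < T.+1) c n k (traj u k) (uat u k).

Definition static_cost (ubar : 'M[R]_(nu, T.+1)) (n : 'I_N)
    (du : 'M[R]_(nu, T.+1)) : R :=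
  Jcost n ubar
  + \sum_(i < nu) \sum_(k < T.+1)
        derive (Jcost n) ubar (delta_mx i k) * du i k
  + 2^-1 * \sum_(i < nu) \sum_(k < T.+1) \sum_(i' < nu) \sum_(k' < T.+1)
        du i k * derive (fun w => derive (Jcost n) w (delta_mx i k)) ubar
                   (delta_mx i' k') * du i' k'.

Definition A_ (xbar : nat -> 'cV[R]_nx) (ubar : 'M[R]_(nu, T.+1)) k
  : 'M[R]_nx := jac (fun x => f k x (uat ubar k)) (xbar k).
Definition B_ (xbar : nat -> 'cV[R]_nx) (ubar : 'M[R]_(nu, T.+1)) k
  : 'M[R]_(nx, nu) := jac (fun u => f k (xbar k) u) (uat ubar k).
Definition G_ (xbar : nat -> 'cV[R]_nx) (ubar : 'M[R]_(nu, T.+1)) k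
  (l : 'I_nx) : 'M[R]_(nx + nu) :=
  hess (stack (fun x u => f k x u l 0)) (col_mx (xbar k) (uat ubar k)).
Definition R_ (xbar : nat -> 'cV[R]_nx) (ubar : 'M[R]_(nu, T.+1)) k
  (dx : 'cV[R]_nx) (du : 'cV[R]_nu) : 'cV[R]_nx :=
  \col_l ((col_mx dx du)^T *m G_ xbar ubar k l *m col_mx dx du) 0 0.

Definition gradc (xbar : nat -> 'cV[R]_nx) (ubar : 'M[R]_(nu, T.+1)) n k
  : 'rV[R]_(nx + nu) :=
  grad (stack (c n k)) (col_mx (xbar k) (uat ubar k)).
Definition M_ (xbar : nat -> 'cV[R]_nx) (ubar : 'M[R]_(nu, T.+1)) n k
  : 'M[R]_(1 + (nx + nu)) :=
  block_mx (2 * c n k (xbar k) (uat ubar k))%:M (gradc xbar ubar n k)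
           (gradc xbar ubar n k)^T
           (hess (stack (c n k)) (col_mx (xbar k) (uat ubar k))).
Definition M1x_ (xbar : nat -> 'cV[R]_nx) (ubar : 'M[R]_(nu, T.+1)) n k
  : 'rV[R]_nx := lsubmx (gradc xbar ubar n k).

Definition dyn_cost (xbar : nat -> 'cV[R]_nx) (ubar : 'M[R]_(nu, T.+1))
    (n : 'I_N) (dx Dx : nat -> 'cV[R]_nx) (du : 'M[R]_(nu, T.+1)) : R :=
  2^-1 * \sum_(k < T.+1)
    (((col_mx 1 (col_mx (dx k) (uat du k)))^T *m M_ xbar ubar n k
        *m col_mx 1 (col_mx (dx k) (uat du k))) 0 0
     + (M1x_ xbar ubar n k *m Dx k) 0 0).

Fixpoint dxs xbar ubar (du : 'M[R]_(nu, T.+1)) (k : nat) : 'cV[R]_nx :=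
  match k with
  | 0 => 0
  | k'.+1 => A_ xbar ubar k' *m dxs xbar ubar du k'
             + B_ xbar ubar k' *m uat du k'
  end.
Fixpoint Dxs xbar ubar (du : 'M[R]_(nu, T.+1)) (k : nat) : 'cV[R]_nx :=
  match k with
  | 0 => 0
  | k'.+1 => A_ xbar ubar k' *m Dxs xbar ubar du k'
             + R_ xbar ubar k' (dxs xbar ubar du k') (uat du k')
  end.
Definition dyn_cost_u xbar ubar n du :=
  dyn_cost xbar ubar n (dxs xbar ubar du) (Dxs xbar ubar du) du.

(* Nash equilibrium: player n (owning the input rows i with own i = n)
   cannot decrease its cost by changing only its own inputs du_{n,:}. *)
Definition isNash (own : 'I_nu -> 'I_N)
    (cost : 'I_N -> 'M[R]_(nu, T.+1) -> R) (du : 'M[R]_(nu, T.+1)) : Prop :=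
  forall (n : 'I_N) (dv : 'M[R]_(nu, T.+1)),
    (forall i k, own i != n -> dv i k = du i k) -> cost n du <= cost n dv.

End Game.
End Defs.

From HB Require Import structures.
From mathcomp Require Import all_boot all_order all_algebra.
From mathcomp Require Import all_classical all_reals all_analysis.
From mathcomp Require Import lra.
Set Implicit Arguments. Unset Strict Implicit. Unset Printing Implicit Defensive.
Import Order.TTheory GRing.Theory Num.Theory.
Import numFieldNormedType.Exports.
Local Open Scope ring_scope.

(* The static objective is the second-order Taylor polynomial
   J(ubar) + J'(ubar) du + 1/2 J''(ubar)[du, du].  By the second-order chain
   rule (g o H)'' = g'(H) H'' + g''(H)[H', H'], the first and second directional
   derivatives of the trajectory along du satisfy exactly the two recursions of
   the dynamic game: dx_{k+1} = A_k dx_k + B_k du_k and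
   Dx_{k+1} = A_k Dx_k + R_k(dx_k, du_k).  Expanding every stage cost in the
   same way turns the Taylor polynomial into the dynamic objective term by
   term, and games with the same objectives have the same Nash equilibria. *)

Section DiffSum.
Variables (R : realType) (V W : normedModType R).

Lemma differentiable_sum_fun n (F : 'I_n -> V -> W) x :
  (forall i, differentiable (F i) x) ->
  differentiable (fun z => \sum_(i < n) F i z) x.
Proof. by move=> dF; rewrite -fct_sumE; exact: differentiable_sum. Qed.

Lemma diff_sum_fun n (F : 'I_n -> V -> W) x v :
  (forall i, differentiable (F i) x) ->
  'd (fun z => \sum_(i < n) F i z) x v = \sum_(i < n) 'd (F i) x v.
Proof.
elim: n F => [|n IH] F dF.
  by under eq_fun do rewrite big_ord0; rewrite big_ord0 diff_cst.
under eq_fun do rewrite big_ord_recr.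
rewrite -[fun z => _ + _]
  /((fun z => \sum_(i < n) F (widen_ord _ i) z) + F ord_max).
rewrite diffD //=; last exact: differentiable_sum_fun.
rewrite big_ord_recr /=.
by have /= -> := IH (fun i => F (widen_ord (leqnSn n) i)) (fun i => dF _).
Qed.

End DiffSum.

Section TwiceDifferentiable.
Variables (R : realType) (V : normedModType R).

Definition twice_differentiable (F : V -> R) :=
  (forall x, differentiable F x) /\
  (forall v x, differentiable (fun z => 'd F z v) x).

Lemma differentiable_mulrl (k : R) (f : V -> R) x :
  differentiable f x -> differentiable (fun z => k * f z) x.
Proof. exact: differentiableZ. Qed.

Lemma diff_mulrl (k : R) (f : V -> R) x w :
  differentiable f x -> 'd (fun z => k * f z) x w = k * 'd f x w.
Proof. by move=> df; rewrite -[fun z => _]/(k *: f) diffZ. Qed.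

Lemma diff_mul_fun (f k : V -> R) x w :
  differentiable f x -> differentiable k x ->
  'd (fun z => f z * k z) x w = f x * 'd k x w + k x * 'd f x w.
Proof. by move=> df dk; rewrite -[fun z => _]/(f * k) diffM. Qed.

Definition diff2 (F : V -> R) x v := 'd (fun z => 'd F z v) x v.

Definition has_diff2 (F : V -> R) x v d1 d2 :=
  [/\ twice_differentiable F, 'd F x v = d1 & diff2 F x v = d2].

Lemma has_diff2_cst (a : R) x v : has_diff2 (fun=> a) x v 0 0.
Proof.
have dcst z : 'd (cst a) z = 0 :> (V -> R) by rewrite diff_cst.
split; [split|by rewrite dcst|].
- by move=> z; exact: differentiable_cst.
- by move=> w z; under eq_fun do rewrite dcst; exact: differentiable_cst.
by rewrite /diff2; under eq_fun do rewrite dcst; rewrite diff_cst.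
Qed.

Lemma has_diff2_linear (L : {linear V -> R}) x v :
  continuous L -> has_diff2 L x v (L v) 0.
Proof.
move=> Lcont; have dL z : 'd L z = L :> (V -> R) by rewrite diff_lin.
split; [split|by rewrite dL|].
- by move=> z; exact: linear_differentiable.
- by move=> w z; under eq_fun do rewrite dL; exact: differentiable_cst.
by rewrite /diff2; under eq_fun do rewrite dL; rewrite diff_cst.
Qed.

Lemma has_diff2_sum n (F : 'I_n -> V -> R) x v d1 d2 :
  (forall i, has_diff2 (F i) x v (d1 i) (d2 i)) ->
  has_diff2 (fun z => \sum_(i < n) F i z) x v (\sum_i d1 i) (\sum_i d2 i).
Proof.
move=> hF; have dF i z : differentiable (F i) z by case: (hF i) => -[].
have ddF i w z : differentiable (fun y => 'd (F i) y w) z.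
  by case: (hF i) => -[].
have dsum w : (fun z => 'd (fun y => \sum_i F i y) z w)
              = fun z => \sum_i 'd (F i) z w.
  by apply/funext => z; rewrite diff_sum_fun.
split; [split|rewrite diff_sum_fun //|rewrite /diff2 dsum diff_sum_fun //].
- by move=> z; exact: differentiable_sum_fun.
- by move=> w z; rewrite dsum; exact: differentiable_sum_fun.
- by apply: eq_bigr => i _; case: (hF i).
- by apply: eq_bigr => i _; case: (hF i).
Qed.

End TwiceDifferentiable.

Section MatrixCoordinates.
Variable R : realType.

Lemma has_diff2_coord p q (i : 'I_p) (j : 'I_q) (x v : 'M[R]_(p, q)) :
  has_diff2 (fun N : 'M[R]_(p, q) => N i j) x v (v i j) 0.
Proof.
have coord_linear : linear (fun N : 'M[R]_(p, q) => N i j).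
  by move=> a A B; rewrite !mxE.
pose coord : {linear 'M[R]_(p, q) -> R} := HB.pack
  (fun N : 'M[R]_(p, q) => N i j) (GRing.isLinear.Build _ _ _ _ _ coord_linear).
by have := has_diff2_linear (L := coord) x v (@coord_continuous _ _ _ i j).
Qed.

Lemma linear_mxE p q (L : {linear 'M[R]_(p, q) -> R}) (v : 'M[R]_(p, q)) :
  L v = \sum_i \sum_j v i j * L (delta_mx i j).
Proof.
rewrite {1}(matrix_sum_delta v) linear_sum; apply: eq_bigr => i _.
by rewrite linear_sum; apply: eq_bigr => j _; rewrite linearZ.
Qed.

Lemma linear_colE m (L : {linear 'cV[R]_m -> R}) (w : 'cV[R]_m) :
  L w = \sum_j w j 0 * L (e_ R j).
Proof. by rewrite linear_mxE; apply: eq_bigr => j _; rewrite big_ord1. Qed.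

Lemma sum_derive_mx p q (F : 'M[R]_(p, q) -> R) (x v : 'M[R]_(p, q)) :
  differentiable F x ->
  \sum_i \sum_j derive F x (delta_mx i j) * v i j = 'd F x v.
Proof.
move=> dF; rewrite (linear_mxE ('d F x)); apply: eq_bigr => i _.
by apply: eq_bigr => j _; rewrite deriveE // mulrC.
Qed.

Lemma diff_diff_mxE p q (F : 'M[R]_(p, q) -> R) x (v w : 'M[R]_(p, q)) :
  twice_differentiable F ->
  'd (fun z => 'd F z v) x w
  = \sum_i \sum_j v i j * 'd (fun z => 'd F z (delta_mx i j)) x w.
Proof.
move=> [_ ddF].
have -> : (fun z => 'd F z v)
    = fun z => \sum_i \sum_j v i j * 'd F z (delta_mx i j).
  by apply/funext => z; exact: linear_mxE.
rewrite [LHS]diff_sum_fun => [|i]; last first.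
  by apply: differentiable_sum_fun => j; exact: differentiable_mulrl.
apply: eq_bigr => i _.
rewrite [LHS]diff_sum_fun => [|j]; last exact: differentiable_mulrl.
by apply: eq_bigr => j _; rewrite [LHS]diff_mulrl.
Qed.

Lemma sum_derive2_mx p q (F : 'M[R]_(p, q) -> R) (x v : 'M[R]_(p, q)) :
  twice_differentiable F ->
  \sum_i \sum_j \sum_i' \sum_j'
     v i j * derive (fun y => derive F y (delta_mx i j)) x (delta_mx i' j')
     * v i' j'
  = diff2 F x v.
Proof.
move=> F2; rewrite /diff2 diff_diff_mxE //; apply: eq_bigr => i _.
apply: eq_bigr => j _; have [dF ddF] := F2.
rewrite -sum_derive_mx // mulr_sumr; apply: eq_bigr => i' _.
rewrite mulr_sumr; apply: eq_bigr => j' _.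
by rewrite mulrA; under eq_fun do rewrite deriveE //.
Qed.

Lemma mx_quadE m (M : 'M[R]_m) (v : 'cV[R]_m) :
  (v^T *m M *m v) 0 0 = \sum_i \sum_j v i 0 * M i j * v j 0.
Proof.
rewrite mxE; under eq_bigr => j _ do rewrite mxE big_distrl /=.
rewrite exchange_big /=; apply: eq_bigr => i _.
by apply: eq_bigr => j _; rewrite !mxE.
Qed.

Lemma grad_mulmx m (F : 'cV[R]_m -> R) (w v : 'cV[R]_m) :
  differentiable F w ->
  (grad F w *m v) 0 0 = 'd F w v.
Proof.
move=> dF; rewrite mxE (linear_colE ('d F w)); apply: eq_bigr => j _.
by rewrite mxE deriveE // mulrC.
Qed.

Lemma hess_quad m (F : 'cV[R]_m -> R) (w v : 'cV[R]_m) :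
  twice_differentiable F ->
  (v^T *m hess F w *m v) 0 0 = diff2 F w v.
Proof.
move=> F2; rewrite -sum_derive2_mx // mx_quadE; apply: eq_bigr => i _.
rewrite big_ord1; apply: eq_bigr => j _.
by rewrite big_ord1 mxE.
Qed.

End MatrixCoordinates.

Lemma col_e_sum (R : realType) m (a : 'I_m -> R) :
  \col_j a j = \sum_j a j *: e_ R j.
Proof.
apply/matrixP => i k; rewrite !mxE summxE (bigD1 i) //= big1 => [|j ji].
  by rewrite !mxE ord1 !eqxx mulr1 addr0.
by rewrite !mxE eq_sym (negbTE ji) mulr0.
Qed.

Lemma diff_diff_colE (R : realType) m (F : 'cV[R]_m -> R) x (w w' : 'cV[R]_m) :
  twice_differentiable F ->
  'd (fun z => 'd F z w) x w'
  = \sum_j w j 0 * 'd (fun z => 'd F z (e_ R j)) x w'.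
Proof.
move=> F2; rewrite [LHS]diff_diff_mxE //.
by apply: eq_bigr => j _; rewrite big_ord1.
Qed.

Section SecondOrderChainRule.
Variables (R : realType) (V : normedModType R) (m : nat).
Variables (g : 'cV[R]_m -> R) (h : 'I_m -> V -> R).
Hypothesis g2 : twice_differentiable g.
Hypothesis h2 : forall j, twice_differentiable (h j).

Let H z := \col_j h j z.

Let HE : H = fun z => \sum_j h j z *: e_ R j.
Proof. by apply/funext => z; exact: col_e_sum. Qed.

Lemma differentiable_col z : differentiable H z.
Proof.
rewrite HE; apply: differentiable_sum_fun => j.
by apply: differentiableZl; case: (h2 j).
Qed.

Lemma diff_col z u : 'd H z u = \col_j 'd (h j) z u.
Proof.
rewrite col_e_sum HE [LHS]diff_sum_fun => [|j]; last first.
  by apply: differentiableZl; case: (h2 j).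
by apply: eq_bigr => j _; have [dh _] := h2 j; rewrite (diffZl _ (dh z)).
Qed.

Let dg y : differentiable g y. Proof. by case: g2. Qed.
Let ddg w y : differentiable (fun z => 'd g z w) y. Proof. by case: g2. Qed.

Lemma diff_comp_col z u :
  'd (g \o H) z u = 'd g (H z) (\col_j 'd (h j) z u).
Proof. by rewrite (diff_comp (differentiable_col z) (dg _)) /= diff_col. Qed.

Let diff_comp_col_sum z u :
  'd (g \o H) z u = \sum_j 'd (h j) z u * 'd g (H z) (e_ R j).
Proof.
by rewrite diff_comp_col [LHS]linear_colE; apply: eq_bigr => j _; rewrite mxE.
Qed.

Let partial_comp j z : differentiable (fun y => 'd g (H y) (e_ R j)) z.
Proof. exact: (differentiable_comp (differentiable_col z) (ddg _ _)). Qed.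

Lemma twice_differentiable_comp_col : twice_differentiable (g \o H).
Proof.
split=> [z|u z]; first exact: differentiable_comp (differentiable_col z) (dg _).
under eq_fun do rewrite diff_comp_col_sum.
apply: differentiable_sum_fun => j; apply: differentiableM => //.
by case: (h2 j).
Qed.

Lemma diff2_comp_col x v :
  diff2 (g \o H) x v
  = 'd g (H x) (\col_j diff2 (h j) x v) + diff2 g (H x) (\col_j 'd (h j) x v).
Proof.
rewrite /diff2; under eq_fun do rewrite diff_comp_col_sum.
rewrite [LHS]diff_sum_fun => [|j]; last first.
  by apply: differentiableM => //; case: (h2 j).
rewrite (eq_bigr (fun j => 'd g (H x) (e_ R j) * diff2 (h j) x v
    + 'd (h j) x v * 'd (fun z => 'd g z (e_ R j)) (H x) (\col_i 'd (h i) x v)))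
  => [|j _]; last first.
  have [dh ddh] := h2 j.
  rewrite [LHS]diff_mul_fun // addrC; congr (_ + _).
  rewrite -[fun z => _]/((fun y => 'd g y (e_ R j)) \o H).
  by rewrite (diff_comp (differentiable_col x) (ddg _ _)) /= diff_col.
rewrite big_split /=; congr (_ + _).
  by rewrite [RHS]linear_colE; apply: eq_bigr => j _; rewrite mxE mulrC.
by rewrite /diff2 [RHS]diff_diff_colE //; apply: eq_bigr => j _; rewrite mxE.
Qed.

End SecondOrderChainRule.

Lemma has_diff2_comp_col (R : realType) (V : normedModType R) m
    (g : 'cV[R]_m -> R) (h : 'I_m -> V -> R) x v (y1 y2 : 'cV[R]_m) :
  twice_differentiable g ->
  (forall j, has_diff2 (h j) x v (y1 j 0) (y2 j 0)) ->
  has_diff2 (fun z => g (\col_j h j z)) x v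
    ('d g (\col_j h j x) y1)
    ('d g (\col_j h j x) y2 + diff2 g (\col_j h j x) y1).
Proof.
move=> g2 hh; have h2 j : twice_differentiable (h j) by case: (hh j).
have col_d1 : \col_j 'd (h j) x v = y1.
  by apply/matrixP => j k; rewrite mxE ord1; case: (hh j).
have col_d2 : \col_j diff2 (h j) x v = y2.
  by apply/matrixP => j k; rewrite mxE ord1; case: (hh j).
split; first exact: twice_differentiable_comp_col.
  by rewrite -[fun z => _]/(g \o _) diff_comp_col // col_d1.
by rewrite -[fun z => _]/(g \o _) diff2_comp_col // col_d1 col_d2.
Qed.

Section StackedDerivatives.
Variables (R : realType) (nx nu : nat).

Lemma derive_stack_lshift (F : 'cV[R]_nx -> 'cV[R]_nu -> R) a b j :
  derive (stack F) (col_mx a b) (e_ R (lshift nu j))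
  = derive (fun x => F x b) a (e_ R j).
Proof.
rewrite /derive /e_ delta_mx_ushift; f_equal; f_equal; apply/funext => t /=.
by rewrite /stack scale_col_mx add_col_mx scaler0 add0r !col_mxKu !col_mxKd.
Qed.

Lemma derive_stack_rshift (F : 'cV[R]_nx -> 'cV[R]_nu -> R) a b j :
  derive (stack F) (col_mx a b) (e_ R (rshift nx j))
  = derive (F a) b (e_ R j).
Proof.
rewrite /derive /e_ delta_mx_dshift; f_equal; f_equal; apply/funext => t /=.
by rewrite /stack scale_col_mx add_col_mx scaler0 add0r !col_mxKu !col_mxKd.
Qed.

Lemma grad_stack (F : 'cV[R]_nx -> 'cV[R]_nu -> R) a b :
  grad (stack F) (col_mx a b) = row_mx (grad (fun x => F x b) a) (grad (F a) b).
Proof.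
apply/matrixP => i j; have [j' ->|j' ->] := split_ordP j.
  by rewrite row_mxEl !mxE derive_stack_lshift.
by rewrite row_mxEr !mxE derive_stack_rshift.
Qed.

Lemma jac_stack_mulmx p (F : 'cV[R]_nx -> 'cV[R]_nu -> 'cV[R]_p) a b dx du l :
  differentiable (stack (fun x u => F x u l 0)) (col_mx a b) ->
  (jac (fun x => F x b) a *m dx + jac (F a) b *m du) l 0
  = 'd (stack (fun x u => F x u l 0)) (col_mx a b) (col_mx dx du).
Proof.
move=> dF; rewrite -grad_mulmx // grad_stack mul_row_col !mxE.
by congr (_ + _); apply: eq_bigr => j _; rewrite !mxE.
Qed.

End StackedDerivatives.

Lemma lsubmx_mulmx (R : realType) p m n q
    (g : 'M[R]_(p, m + n)) (X : 'M[R]_(m, q)) :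
  lsubmx g *m X = g *m col_mx X 0.
Proof. by rewrite -{2}(hsubmxK g) mul_row_col mulmx0 addr0. Qed.

Lemma mx_quad_border (R : realType) m (a : R) (g : 'rV[R]_m) (H : 'M[R]_m)
    (w : 'cV[R]_m) :
  ((col_mx 1 w)^T *m block_mx a%:M g g^T H *m col_mx 1 w) 0 0
  = a + 2 * (g *m w) 0 0 + (w^T *m H *m w) 0 0.
Proof.
rewrite tr_col_mx mul_row_block mul_row_col trmx1 !mul1mx mulmx1 -trmx_mul.
by rewrite mulmxDl !mxE eqxx mulr1n mulr_natl mulr2n !addrA.
Qed.

Lemma C2_twice_differentiable (R : realType) m (F : 'cV[R]_m -> R) :
  C2 F -> twice_differentiable F.
Proof. by case=> dF [ddF _]. Qed.

Section LinearQuadraticGame.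
Variables (R : realType) (N nx nu T : nat).
Variable f : nat -> 'cV[R]_nx -> 'cV[R]_nu -> 'cV[R]_nx.
Variable c : 'I_N -> nat -> 'cV[R]_nx -> 'cV[R]_nu -> R.
Variables (x0 : 'cV[R]_nx) (xbar : nat -> 'cV[R]_nx) (ubar : 'M[R]_(nu, T.+1)).
Hypothesis f2 : forall k l, (k <= T)%N -> C2 (stack (fun x u => f k x u l 0)).
Hypothesis c2 : forall n k, (k <= T)%N -> C2 (stack (c n k)).
Hypothesis xbar0 : xbar 0%N = x0.
Hypothesis xbarS : forall k, (k < T)%N -> xbar k.+1 = f k (xbar k) (uat ubar k).

Lemma traj_nominal k : (k <= T)%N -> traj f x0 ubar k = xbar k.
Proof.
elim: k => [|k IH kT] /=; first by rewrite xbar0.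
by rewrite IH ?xbarS // ltnW.
Qed.

Variable du : 'M[R]_(nu, T.+1).

Local Notation dxs := (dxs f xbar ubar du).
Local Notation Dxs := (Dxs f xbar ubar du).
Local Notation xk k := (col_mx (xbar k) (uat ubar k)).
Local Notation dxk k := (col_mx (dxs k) (uat du k)).

Lemma has_diff2_stage k (F : 'cV[R]_nx -> 'cV[R]_nu -> R) :
  (k <= T)%N -> twice_differentiable (stack F) ->
  (forall l, has_diff2 (fun u => traj f x0 u k l 0) ubar du
                       (dxs k l 0) (Dxs k l 0)) ->
  has_diff2 (fun u => F (traj f x0 u k) (uat u k)) ubar du
    ('d (stack F) (xk k) (dxk k))
    ('d (stack F) (xk k) (col_mx (Dxs k) 0) + diff2 (stack F) (xk k) (dxk k)).
Proof.
move=> kT F2 traj2.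
pose h j (u : 'M[R]_(nu, T.+1)) : R := col_mx (traj f x0 u k) (uat u k) j 0.
have colh u : \col_j h j u = col_mx (traj f x0 u k) (uat u k).
  by apply/matrixP => j i; rewrite mxE ord1.
have -> : (fun u => F (traj f x0 u k) (uat u k))
          = fun u => stack F (\col_j h j u).
  by apply/funext => u; rewrite colh /stack col_mxKu col_mxKd.
rewrite -(traj_nominal kT) -(colh ubar).
apply: has_diff2_comp_col => // j; rewrite /h.
have [j' ->|j' ->] := split_ordP j.
  by rewrite !col_mxEu; under eq_fun do rewrite col_mxEu; exact: traj2.
rewrite !col_mxEd !mxE; under eq_fun do rewrite col_mxEd mxE.
exact: has_diff2_coord.
Qed.

Lemma has_diff2_traj k : (k <= T)%N ->
  forall l, has_diff2 (fun u => traj f x0 u k l 0) ubar du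
                      (dxs k l 0) (Dxs k l 0).
Proof.
elim: k => [_ l|k IH kT l] /=; first by rewrite !mxE; exact: has_diff2_cst.
have Fl2 := C2_twice_differentiable (f2 l (ltnW kT)).
have [traj2 d1 d2] := has_diff2_stage (ltnW kT) Fl2 (IH (ltnW kT)).
have dFl := Fl2.1 (xk k).
split; first exact: traj2.
  by rewrite d1 /A_ /B_ jac_stack_mulmx.
(* (A_k Dx_k)_l is the linearization of f_k applied to the pair (Dx_k, 0). *)
rewrite d2 mxE -[A_ _ _ _ _ *m _]addr0 -(mulmx0 _ (B_ f xbar ubar k)).
by rewrite /A_ /B_ jac_stack_mulmx // mxE hess_quad.
Qed.

Lemma has_diff2_cost n k : (k <= T)%N ->
  has_diff2 (fun u => c n k (traj f x0 u k) (uat u k)) ubar du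
    ((gradc c xbar ubar n k *m dxk k) 0 0)
    ((M1x_ c xbar ubar n k *m Dxs k) 0 0
     + ((dxk k)^T *m hess (stack (c n k)) (xk k) *m dxk k) 0 0).
Proof.
move=> kT; have c2' := C2_twice_differentiable (c2 n kT).
have [cost2 d1 d2] := has_diff2_stage kT c2' (has_diff2_traj kT).
split; first exact: cost2.
  by rewrite d1 grad_mulmx //; exact: c2'.1.
by rewrite d2 /M1x_ lsubmx_mulmx !grad_mulmx ?hess_quad //; exact: c2'.1.
Qed.

Lemma has_diff2_Jcost n :
  has_diff2 (Jcost f c x0 n) ubar du
    (\sum_(k < T.+1) (gradc c xbar ubar n k *m dxk k) 0 0)
    (\sum_(k < T.+1) ((M1x_ c xbar ubar n k *m Dxs k) 0 0
       + ((dxk k)^T *m hess (stack (c n k)) (xk k) *m dxk k) 0 0)).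
Proof. by apply: has_diff2_sum => k; exact: has_diff2_cost (ltn_ord k). Qed.

Lemma static_cost_dyn_cost n :
  static_cost f c x0 ubar n du = dyn_cost_u f c xbar ubar n du.
Proof.
have [J2 d1 d2] := has_diff2_Jcost n.
rewrite /static_cost sum_derive_mx ?sum_derive2_mx //; last exact: J2.1.
rewrite d1 d2 /dyn_cost_u /dyn_cost /Jcost !mulr_sumr -!big_split.
apply: eq_bigr => k _ /=; rewrite traj_nominal; last exact: ltn_ord k.
rewrite /M_ (mx_quad_border (2 * _)); lra.
Qed.

Lemma dxs_unique (dx : nat -> 'cV[R]_nx) :
  dx 0%N = 0 ->
  (forall k, (k <= T)%N ->
     dx k.+1 = A_ f xbar ubar k *m dx k + B_ f xbar ubar k *m uat du k) ->
  forall k, (k <= T.+1)%N -> dx k = dxs k.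
Proof.
by move=> dx0 dxS; elim=> [//|k IH kT] /=; rewrite dxS // IH // ltnW.
Qed.

Lemma Dxs_unique (dx Dx : nat -> 'cV[R]_nx) :
  (forall k, (k <= T)%N -> dx k = dxs k) ->
  Dx 0%N = 0 ->
  (forall k, (k <= T)%N ->
     Dx k.+1 = A_ f xbar ubar k *m Dx k + R_ f xbar ubar k (dx k) (uat du k)) ->
  forall k, (k <= T.+1)%N -> Dx k = Dxs k.
Proof.
move=> edx Dx0 DxS; elim=> [//|k IH kT] /=.
by rewrite DxS // IH ?edx // ltnW.
Qed.

Lemma dyn_cost_unique n (dx Dx : nat -> 'cV[R]_nx) :
  dx 0%N = 0 -> Dx 0%N = 0 ->
  (forall k, (k <= T)%N ->
     dx k.+1 = A_ f xbar ubar k *m dx k + B_ f xbar ubar k *m uat du k) ->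
  (forall k, (k <= T)%N ->
     Dx k.+1 = A_ f xbar ubar k *m Dx k + R_ f xbar ubar k (dx k) (uat du k)) ->
  dyn_cost c xbar ubar n dx Dx du = dyn_cost_u f c xbar ubar n du.
Proof.
move=> dx0 Dx0 dxS DxS.
have edx k (kT : (k <= T)%N) := dxs_unique dx0 dxS (leqW kT).
have eDx k (kT : (k <= T)%N) := Dxs_unique edx Dx0 DxS (leqW kT).
rewrite /dyn_cost_u /dyn_cost; congr (_ * _); apply: eq_bigr => k _.
by rewrite edx ?eDx //; exact: ltn_ord k.
Qed.

End LinearQuadraticGame.

Theorem lemma4 (R : realType) (N nx nu T : nat) (own : 'I_nu -> 'I_N)
  (f : nat -> 'cV[R]_nx -> 'cV[R]_nu -> 'cV[R]_nx)
  (c : 'I_N -> nat -> 'cV[R]_nx -> 'cV[R]_nu -> R)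
  (x0 : 'cV[R]_nx) (xbar : nat -> 'cV[R]_nx) (ubar : 'M[R]_(nu, T.+1)) :
  (forall k l, (k <= T)%N -> C2 (stack (fun x u => f k x u l 0))) ->
  (forall n k, (k <= T)%N -> C2 (stack (c n k))) ->
  xbar 0%N = x0 ->
  (forall k, (k < T)%N -> xbar k.+1 = f k (xbar k) (uat ubar k)) ->
  (forall (n : 'I_N) (du : 'M[R]_(nu, T.+1)) (dx Dx : nat -> 'cV[R]_nx),
     dx 0%N = 0 -> Dx 0%N = 0 ->
     (forall k, (k <= T)%N ->
        dx k.+1 = A_ f xbar ubar k *m dx k + B_ f xbar ubar k *m uat du k) ->
     (forall k, (k <= T)%N ->
        Dx k.+1 = A_ f xbar ubar k *m Dx k
                  + R_ f xbar ubar k (dx k) (uat du k)) ->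
     static_cost f c x0 ubar n du = dyn_cost c xbar ubar n dx Dx du)
  /\
  (forall du : 'M[R]_(nu, T.+1),
     isNash own (static_cost f c x0 ubar) du <->
     isNash own (dyn_cost_u f c xbar ubar) du).
Proof.
move=> f2 c2 xbar0 xbarS.
have costE : static_cost f c x0 ubar = dyn_cost_u f c xbar ubar.
  by apply/funext => n; apply/funext => du; exact: static_cost_dyn_cost.
split=> [n du dx Dx dx0 Dx0 dxS DxS | du]; rewrite costE //.
by rewrite (dyn_cost_unique c n dx0 Dx0 dxS DxS).
Qed.
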